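(* The assignment $A\mapsto F^2$, $B\mapsto F^{12}\,[F(F'')^{-1}]^2=\mathrm{diag}(1,-e^{i\pi/3},e^{2i\pi/3})$, $H_1\mapsto \tilde B E$, $H_3\mapsto E$ extends to a group isomorphism $Fr(162)=\mathcal N\rtimes\langle H_1,H_3\rangle\to D(9,1,1;2,1,1)=\langle F^2,[F(F'')^{-1}]^2\rangle\rtimes\langle \tilde B,E\rangle$. In particular $Fr(162)\cong D(9,1,1;2,1,1)$.
   Context: Let $\omega=e^{2i\pi/3}$. Define $G_1=\mathrm{diag}(e^{7i\pi/9},-e^{4i\pi/9},-e^{7i\pi/9})$, $G_2=\begin{pmatrix}-\tfrac12 e^{4i\pi/9}&\tfrac{1}{\sqrt2}e^{7i\pi/9}&\tfrac12 e^{4i\pi/9}\\ \tfrac{1}{\sqrt2}e^{7i\pi/9}&0&\tfrac{1}{\sqrt2}e^{7i\pi/9}\\ \tfrac12 e^{4i\pi/9}&\tfrac{1}{\sqrt2}e^{7i\pi/9}&-\tfrac12 e^{4i\pi/9}\end{pmatrix}$ and $Fr(162)=\langle G_1,G_2\rangle\subset SU(3)$. Let $A=G_1G_2^2G_1^{-1}=\tfrac12 e^{5i\pi/9}\begin{pmatrix}-1+e^{i\pi/3}&0&1+e^{i\pi/3}\\0&-2&0\\1+e^{i\pi/3}&0&-1+e^{i\pi/3}\end{pmatrix}$, $B=G_1G_2^{-2}G_1=\tfrac12\begin{pmatrix}1+\omega&0&-1+\omega\\0&-2e^{i\pi/3}&0\\-1+\omega&0&1+\omega\end{pmatrix}$,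 $\mathcal N=\langle A,B\rangle$, $H_1=\begin{pmatrix}-\frac12&-\frac1{\sqrt2}&-\frac12\\-\frac1{\sqrt2}&0&\frac1{\sqrt2}\\-\frac12&\frac1{\sqrt2}&-\frac12\end{pmatrix}$, $H_3=\begin{pmatrix}\frac12&\frac1{\sqrt2}&-\frac12\\\frac1{\sqrt2}&0&\frac1{\sqrt2}\\\frac12&-\frac1{\sqrt2}&-\frac12\end{pmatrix}$ (both in $Fr(162)$). Let $F=\mathrm{diag}(e^{i\pi/9},e^{i\pi/9},e^{-2i\pi/9})$, $F''=\mathrm{diag}(e^{-2i\pi/9},e^{i\pi/9},e^{i\pi/9})$, $E=\begin{pmatrix}0&1&0\\0&0&1\\1&0&0\end{pmatrix}$, $\tilde B=\begin{pmatrix}-1&0&0\\0&0&-1\\0&-1&0\end{pmatrix}$, and $D(9,1,1;2,1,1)=\langle F^2,E,\tilde B\rangle\subset SU(3)$. *)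

From HB Require Import structures.
From mathcomp Require Import all_boot all_order all_algebra all_field.
Set Implicit Arguments. Unset Strict Implicit. Unset Printing Implicit Defensive.
Import Order.TTheory GRing.Theory Num.Theory.
Local Open Scope ring_scope.

Notation M3 := 'M[algC]_3.

Definition mx3 (a b c d e f g h k : algC) : M3 :=
  \matrix_(i < 3, j < 3)
    nth 0 (nth [::] [:: [:: a; b; c]; [:: d; e; f]; [:: g; h; k]] i) j.

Definition diag3 (a b c : algC) : M3 := mx3 a 0 0 0 b 0 0 0 c.

(* z = e^{i pi/9}: the 9th root of -1 with minimal nonnegative argument *)
Definition z : algC := 9.-root (-1).
Definition s2 : algC := sqrtC 2.

Inductive gen (gs : seq M3) : M3 -> Prop :=
| gen_one : gen gs 1%:M
| gen_in x : x \in gs -> gen gs x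
| gen_mul x y : gen gs x -> gen gs y -> gen gs (x *m y)
| gen_inv x : gen gs x -> gen gs (invmx x).

Definition G1 : M3 := diag3 (z ^+ 7) (- z ^+ 4) (- z ^+ 7).
Definition G2 : M3 :=
  mx3 (- z ^+ 4 / 2) (z ^+ 7 / s2) (z ^+ 4 / 2)
      (z ^+ 7 / s2)  0            (z ^+ 7 / s2)
      (z ^+ 4 / 2)   (z ^+ 7 / s2) (- z ^+ 4 / 2).

Definition Fr162 := gen [:: G1; G2].

Definition A : M3 := G1 *m (G2 *m G2) *m invmx G1.
Definition B : M3 := G1 *m invmx (G2 *m G2) *m G1.
Definition NN := gen [:: A; B].

Definition H1 : M3 :=
  mx3 (- 1/2) (- 1/s2) (- 1/2)
      (- 1/s2) 0 (1/s2)
      (- 1/2) (1/s2) (- 1/2).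
Definition H3 : M3 :=
  mx3 (1/2) (1/s2) (- 1/2)
      (1/s2) 0 (1/s2)
      (1/2) (- 1/s2) (- 1/2).
Definition KH := gen [:: H1; H3].

Definition F : M3 := diag3 z z (z ^+ 2)^-1.
Definition F'' : M3 := diag3 (z ^+ 2)^-1 z z.
Definition E : M3 := mx3 0 1 0 0 0 1 1 0 0.
Definition Bt : M3 := mx3 (-1) 0 0 0 0 (-1) 0 (-1) 0.

Definition C2 : M3 := (F *m invmx F'') *m (F *m invmx F'').

Definition D9 := gen [:: F *m F; E; Bt].
Definition ND := gen [:: F *m F; C2].
Definition KD := gen [:: Bt; E].

Definition semidirect (G N K : M3 -> Prop) : Prop :=
  [/\ (forall x, N x -> G x), (forall x, K x -> G x),
      (forall g n, G g -> N n -> N (invmx g *m n *m g)),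
      (forall x, N x -> K x -> x = 1%:M)
    & (forall g, G g -> exists n k, [/\ N n, K k & g = n *m k])].

Definition group_iso (G H : M3 -> Prop) (f : M3 -> M3) : Prop :=
  [/\ (forall x, G x -> H (f x)),
      (forall x y, G x -> G y -> f (x *m y) = f x *m f y),
      (forall x y, G x -> G y -> f x = f y -> x = y)
    & (forall y, H y -> exists2 x, G x & f x = y)].

From HB Require Import structures.
From mathcomp Require Import all_boot all_order all_algebra all_field.
From mathcomp Require Import ring zify.
Import Order.TTheory GRing.Theory Num.Theory.
Local Open Scope ring_scope.
Set Implicit Arguments. Unset Strict Implicit.

(* The real matrix P = [[1,0,1],[0,√2,0],[-1,0,1]] conjugates G1, G2,
   H1, H3 to monomial matrices whose entries are powers of z = e^{iπ/9}, and
   the conjugated group P⁻¹ Fr(162) P is generated by the same monomial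
   matrices as D = <F², E, Bt> (checked on generators).  All concrete identities
   are computed in the encoding [mono p e] of monomial matrices (a map p of
   positions and a vector e of exponents), where products and equalities
   reduce to arithmetic on exponents modulo 18. *)

Section MatrixInverse.
Variables (R : comUnitRingType) (n : nat).
Implicit Types X Y : 'M[R]_n.

Lemma invmx_eq X Y : X *m Y = 1%:M -> invmx X = Y.
Proof.
move=> XY; have [uX _] := mulmx1_unit XY.
by rewrite -[invmx X]mulmx1 -XY mulmxA mulVmx // mul1mx.
Qed.

Lemma invmxM X Y :
  X \in unitmx -> Y \in unitmx -> invmx (X *m Y) = invmx Y *m invmx X.
Proof.
move=> uX uY; apply: invmx_eq.
by rewrite -mulmxA (mulmxA Y) mulmxV // mul1mx mulmxV.
Qed.
End MatrixInverse.

Lemma gen_hom (h : M3 -> M3) gs hs :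
  h 1%:M = 1%:M -> (forall x y, h (x *m y) = h x *m h y) ->
  (forall x, h (invmx x) = invmx (h x)) ->
  (forall g, g \in gs -> gen hs (h g)) -> forall x, gen gs x -> gen hs (h x).
Proof.
move=> h1 hM hV hgs x; elim=> {x} [|x /hgs //|x y _ hx _ hy|x _ hx].
- by rewrite h1; apply: gen_one.
- by rewrite hM; apply: gen_mul.
- by rewrite hV; apply: gen_inv.
Qed.

Lemma gen_sub gs hs :
  (forall g, g \in gs -> gen hs g) -> forall x, gen gs x -> gen hs x.
Proof. by move=> hgs; apply: (@gen_hom id). Qed.

Lemma gen_same gs hs :
  (forall g, g \in gs -> gen hs g) -> (forall g, g \in hs -> gen gs g) ->
  forall x, gen gs x <-> gen hs x.
Proof. by move=> gs_hs hs_gs x; split; apply: gen_sub. Qed.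

Lemma gen_unit gs :
  (forall g, g \in gs -> g \in unitmx) -> forall x, gen gs x -> x \in unitmx.
Proof.
move=> gs_unit x; elim=> {x} [|x /gs_unit //|x y _ ux _ uy|x _ ux].
- exact: unitmx1.
- by rewrite unitmx_mul ux.
- by rewrite unitmx_inv.
Qed.

Lemma gen_pow gs x k : gen gs x -> gen gs (x ^+ k).
Proof.
move=> gx; elim: k => [|k gxk]; first by rewrite expr0; apply: gen_one.
by rewrite exprS -mulmxE; apply: gen_mul.
Qed.

Inductive mon (gs : seq M3) : M3 -> Prop :=
| mon_one : mon gs 1%:M
| mon_in x : x \in gs -> mon gs x
| mon_mul x y : mon gs x -> mon gs y -> mon gs (x *m y).

Lemma mon_inv_gen gs g k :
  g \in gs -> g *m g ^+ k = 1%:M -> g \in unitmx /\ mon gs (invmx g).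
Proof.
move=> g_gs gk; have [ug _] := mulmx1_unit gk; rewrite (invmx_eq gk).
split=> //; elim: k {gk} => [|k gk]; first by rewrite expr0; apply: mon_one.
by rewrite exprS -mulmxE; apply: mon_mul => //; apply: mon_in.
Qed.

Lemma gen_ind_mul gs (Q : M3 -> Prop) :
  (forall g, g \in gs -> g \in unitmx /\ mon gs (invmx g)) ->
  Q 1%:M -> (forall g, g \in gs -> Q g) ->
  (forall x y, Q x -> Q y -> Q (x *m y)) -> forall x, gen gs x -> Q x.
Proof.
move=> gs_inv Q1 Qgs QM.
have mon_inv x : mon gs x -> x \in unitmx /\ mon gs (invmx x).
  elim=> {x} [|x /gs_inv //|x y _ [ux mx] _ [uy my]].
    by rewrite invmx1; split; [apply: unitmx1 | apply: mon_one].
  by rewrite unitmx_mul ux uy invmxM //; split=> //; apply: mon_mul.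
have gen_mon x : gen gs x -> mon gs x.
  elim=> {x} [|x x_gs|x y _ mx _ my|x _ /mon_inv[] //].
  - exact: mon_one.
  - exact: mon_in.
  - exact: mon_mul.
move=> x /gen_mon; elim=> {x} [|x /Qgs|x y _ Qx _ Qy] //; exact: QM.
Qed.

Definition conjm (P x : M3) : M3 := invmx P *m x *m P.

Lemma conj1m x : conjm 1%:M x = x.
Proof. by rewrite /conjm invmx1 mul1mx mulmx1. Qed.

Lemma conjmMl P Q x :
  P \in unitmx -> Q \in unitmx -> conjm (P *m Q) x = conjm Q (conjm P x).
Proof. by move=> uP uQ; rewrite /conjm invmxM // !mulmxA. Qed.

Section Conjugation.
Variable P : M3.
Hypothesis uP : P \in unitmx.

Lemma conjm1 : conjm P 1%:M = 1%:M.
Proof. by rewrite /conjm mulmx1 mulVmx. Qed.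

Lemma conjmM x y : conjm P (x *m y) = conjm P x *m conjm P y.
Proof. by rewrite /conjm !mulmxA mulmxK. Qed.

Lemma conjmV x : conjm P (invmx x) = invmx (conjm P x).
Proof.
have [ux | nux] := boolP (x \in unitmx).
  by apply/esym/invmx_eq; rewrite -conjmM mulmxV // conjm1.
have ncx : conjm P x \notin unitmx.
  by rewrite /conjm !unitmx_mul (negbTE nux) andbF.
by rewrite !invmx_out.
Qed.

Lemma conjmK x : conjm (invmx P) (conjm P x) = x.
Proof. by rewrite /conjm invmxK !mulmxA mulmxV // mul1mx mulmxK. Qed.

Lemma conjmVK x : conjm P (conjm (invmx P) x) = x.
Proof. by rewrite /conjm invmxK !mulmxA mulVmx // mul1mx mulmxKV. Qed.

Lemma conjm_inj x y : conjm P x = conjm P y -> x = y.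
Proof. by move=> exy; rewrite -(conjmK x) exy conjmK. Qed.

Lemma gen_conjm_sub gs hs :
  (forall g, g \in gs -> gen hs (conjm P g)) ->
  forall x, gen gs x -> gen hs (conjm P x).
Proof. exact: gen_hom conjm1 conjmM conjmV. Qed.
End Conjugation.

Lemma gen_conjm P gs x : P \in unitmx ->
  gen gs x <-> gen (map (conjm P) gs) (conjm P x).
Proof.
move=> uP; have uVP : invmx P \in unitmx by rewrite unitmx_inv.
split; first by apply: gen_conjm_sub => // g g_gs; apply/gen_in/map_f.
move=> gx; rewrite -(conjmK uP x); apply: (gen_conjm_sub uVP) gx.
by move=> _ /mapP[g g_gs ->]; rewrite conjmK //; apply: gen_in.
Qed.

Section SemidirectCriterion.
Variables gs ns ks : seq M3.
Hypothesis gs_unit : forall g, g \in gs -> g \in unitmx.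
Hypothesis ns_gen : forall n, n \in ns -> gen gs n.
Hypothesis ks_gen : forall k, k \in ks -> gen gs k.
Hypothesis gs_normal : forall g n, g \in gs -> n \in ns ->
  gen ns (conjm g n) /\ gen ns (conjm (invmx g) n).
Hypothesis gs_factor : forall g, g \in gs ->
  exists n k, [/\ gen ns n, gen ks k & g = n *m k].
Hypothesis ns_ks_trivial : forall x, gen ns x -> gen ks x -> x = 1%:M.

Lemma gen_normal g : gen gs g -> forall n, gen ns n ->
  gen ns (conjm g n) /\ gen ns (conjm (invmx g) n).
Proof.
elim=> {g} [|g g_gs|x y gx Nx gy Ny|x _ Nx] n nN.
- by rewrite invmx1 conj1m.
- have ug := gs_unit g_gs; have uVg : invmx g \in unitmx by rewrite unitmx_inv.
  split; [apply: (gen_conjm_sub ug) nN | apply: (gen_conjm_sub uVg) nN];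
    by move=> n' /(gs_normal g_gs) [].
- have ux := gen_unit gs_unit gx; have uy := gen_unit gs_unit gy.
  rewrite invmxM // !conjmMl ?unitmx_inv //.
  by split; [apply: (proj1 (Ny _ (proj1 (Nx _ nN))))
            | apply: (proj2 (Nx _ (proj2 (Ny _ nN))))].
- by rewrite invmxK; have [] := Nx _ nN.
Qed.

(* G = N·K: the products n k are closed under products and inverses. *)
Lemma gen_factor g : gen gs g ->
  exists n k, [/\ gen ns n, gen ks k & g = n *m k].
Proof.
have kG := gen_sub ks_gen; have nG := gen_sub ns_gen.
elim=> {g} [|g /gs_factor //
  |x y _ [n1 [k1 [n1N k1K ->]]] _ [n2 [k2 [n2N k2K ->]]]
  |x _ [n [k [nN kK ->]]]].
- by exists 1%:M, 1%:M; rewrite mulmx1; split=> //; apply: gen_one.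
- have uk1 := gen_unit gs_unit (kG _ k1K).
  exists (n1 *m conjm (invmx k1) n2), (k1 *m k2); split.
  + by apply: gen_mul => //; apply: (proj2 (gen_normal (kG _ k1K) n2N)).
  + exact: gen_mul.
  + by rewrite /conjm invmxK !mulmxA mulmxKV.
- have uk := gen_unit gs_unit (kG _ kK); have un := gen_unit gs_unit (nG _ nN).
  exists (conjm k (invmx n)), (invmx k); split.
  + exact: (proj1 (gen_normal (kG _ kK) (gen_inv nN))).
  + exact: gen_inv.
  + by rewrite /conjm invmxM // mulmxK.
Qed.

Lemma semidirect_gen : semidirect (gen gs) (gen ns) (gen ks).
Proof.
split; [exact: gen_sub | exact: gen_sub | | exact: ns_ks_trivial
       | exact: gen_factor].
by move=> g n gG nN; have [] := gen_normal gG nN.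
Qed.
End SemidirectCriterion.

Lemma semidirect_conjm P (G N K G' N' K' : M3 -> Prop) : P \in unitmx ->
  (forall x, G x <-> G' (conjm P x)) -> (forall x, N x <-> N' (conjm P x)) ->
  (forall x, K x <-> K' (conjm P x)) ->
  semidirect G' N' K' -> semidirect G N K.
Proof.
move=> uP eG eN eK [NG KG normal trivial factor]; split.
- by move=> x /eN /NG /eG.
- by move=> x /eK /KG /eG.
- move=> g n /eG gG /eN nN; apply/eN.
  by rewrite !conjmM // conjmV //; apply: normal.
- move=> x /eN nN /eK kK; apply: (conjm_inj uP).
  by rewrite conjm1 //; apply: trivial.
- move=> g /eG /factor [n [k [nN kK e]]].
  have uVP : invmx P \in unitmx by rewrite unitmx_inv.
  exists (conjm (invmx P) n), (conjm (invmx P) k); split.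
  + by apply/eN; rewrite conjmVK.
  + by apply/eK; rewrite conjmVK.
  + by apply: (conjm_inj uP); rewrite conjmM // !conjmVK.
Qed.

Lemma z_exp9 : z ^+ 9 = -1.
Proof. by rewrite /z rootCK. Qed.

Lemma z_exp18 : z ^+ 18 = 1.
Proof. by rewrite (exprM z 9 2) z_exp9 expr2 mulrNN mulr1. Qed.

Lemma z_expmod a : z ^+ a = z ^+ (a %% 18)%N.
Proof. by rewrite {1}(divn_eq a 18) exprD mulnC exprM z_exp18 expr1n mul1r. Qed.

Lemma z_exp_eqmod a b : (a %% 18 = b %% 18)%N -> z ^+ a = z ^+ b.
Proof. by move=> ab; rewrite z_expmod ab -z_expmod. Qed.

Lemma z_exp_dvd a : (18 %| a)%N -> z ^+ a = 1.
Proof. by move=> /eqP a0; rewrite z_expmod a0 expr0. Qed.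

Lemma z_exp_neq0 a : z ^+ a != 0.
Proof.
apply: expf_neq0; apply/eqP=> z0; have := z_exp9.
by rewrite z0 expr0n /= => /eqP; rewrite eq_sym oppr_eq0 oner_eq0.
Qed.

Lemma z_exp_add9 a b : (a + 9 = b)%N -> - z ^+ a = z ^+ b.
Proof. by move<-; rewrite exprD z_exp9 mulrN1. Qed.

Lemma z_exp2_inv : (z ^+ 2)^-1 = z ^+ 16.
Proof.
by apply: (mulfI (z_exp_neq0 2)); rewrite mulfV ?z_exp_neq0 // -exprD z_exp18.
Qed.

(* A power of z that is both a 9th and a square root of unity is 1. *)
Lemma z_exp_even_9 a b : ~~ odd a -> (9 %| b)%N -> z ^+ a = z ^+ b -> z ^+ a = 1.
Proof.
move=> ev_a b9 ab.
have y9 : z ^+ a ^+ 9 = 1.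
  by rewrite -exprM z_exp_dvd // (dvdn_mul (_ : 2 %| a)%N (dvdnn 9)) // dvdn2.
have y2 : z ^+ a ^+ 2 = 1.
  by rewrite ab -exprM z_exp_dvd // (dvdn_mul b9 (dvdnn 2)).
by rewrite -y9 (_ : 9 = 1 + 2 * 4)%N // exprD exprM y2 expr1n mulr1 expr1.
Qed.

Definition mono (p e : nat -> nat) : M3 :=
  \matrix_(i < 3, j < 3) if p i == j then z ^+ e i else 0.

Definition L (s : seq nat) : nat -> nat := fun i => nth 0%N s i.
Definition diagm (e : seq nat) : M3 := mono (fun i => i) (L e).
Definition permm (p e : seq nat) : M3 := mono (L p) (L e).

Definition ok3 (p : nat -> nat) : bool := all (fun i => p i < 3)%N (iota 0 3).

Lemma ok3E p : ok3 p <-> forall i, (i < 3)%N -> (p i < 3)%N.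
Proof.
split; first by move=> /allP p3 i i3; apply: p3; rewrite mem_iota.
by move=> p3; apply/allP=> i; rewrite mem_iota => /p3.
Qed.

Lemma mono_mul p1 e1 p2 e2 : ok3 p1 ->
  mono p1 e1 *m mono p2 e2 =
  mono (fun i => p2 (p1 i)) (fun i => e1 i + e2 (p1 i))%N.
Proof.
move=> /ok3E p13; apply/matrixP=> i j; rewrite !mxE.
rewrite (bigD1 (Ordinal (p13 i (ltn_ord i)))) //= big1 ?addr0.
  by rewrite !mxE eqxx; case: eqP => _; [rewrite exprD | rewrite mulr0].
move=> k /negbTE pik; rewrite !mxE.
suff -> : (p1 i == k) = false by rewrite mul0r.
by apply: contraFF pik => /eqP pk; apply/eqP/val_inj.
Qed.

Lemma mono_ext p e p' e' : (forall i, (i < 3)%N -> p i = p' i) ->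
  (forall i, (i < 3)%N -> z ^+ e i = z ^+ e' i) -> mono p e = mono p' e'.
Proof.
by move=> pp' ee'; apply/matrixP=> i j; rewrite !mxE pp' ?ee' ?ltn_ord.
Qed.

Definition same_mono (p e p' e' : nat -> nat) : bool :=
  all (fun i => (p i == p' i) && (e i %% 18 == e' i %% 18))%N (iota 0 3).

Lemma mono_eq p e p' e' : same_mono p e p' e' -> mono p e = mono p' e'.
Proof.
move=> /allP same.
have same_i i : (i < 3)%N -> ((p i == p' i) && (e i %% 18 == e' i %% 18))%N.
  by move=> i3; apply: same; rewrite mem_iota.
by apply: mono_ext => i /same_i /andP[/eqP pi /eqP ei] //; apply: z_exp_eqmod.
Qed.

Lemma mono1 : mono (fun i => i) (fun _ => 0%N) = 1%:M.
Proof. by apply/matrixP=> i j; rewrite !mxE expr0 val_eqE; case: (i == j). Qed.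

Lemma mono_scale a p e : z ^+ a *: mono p e = mono p (fun i => a + e i)%N.
Proof.
apply/matrixP=> i j; rewrite !mxE; case: eqP => _; last by rewrite mulr0.
by rewrite exprD.
Qed.

Lemma mono_diag_exp e k :
  mono (fun i => i) e ^+ k = mono (fun i => i) (fun i => k * e i)%N.
Proof.
elim: k => [|k ek]; first by rewrite expr0 -idmxE -mono1; apply: mono_eq.
by rewrite exprS -mulmxE ek mono_mul //; apply: mono_ext => // i _; rewrite mulSn.
Qed.

Lemma mx3_mul a1 a2 a3 a4 a5 a6 a7 a8 a9 b1 b2 b3 b4 b5 b6 b7 b8 b9 :
  mx3 a1 a2 a3 a4 a5 a6 a7 a8 a9 *m mx3 b1 b2 b3 b4 b5 b6 b7 b8 b9 =
  mx3 (a1*b1 + a2*b4 + a3*b7) (a1*b2 + a2*b5 + a3*b8) (a1*b3 + a2*b6 + a3*b9)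
      (a4*b1 + a5*b4 + a6*b7) (a4*b2 + a5*b5 + a6*b8) (a4*b3 + a5*b6 + a6*b9)
      (a7*b1 + a8*b4 + a9*b7) (a7*b2 + a8*b5 + a9*b8) (a7*b3 + a8*b6 + a9*b9).
Proof.
apply/matrixP=> i j; rewrite !mxE !big_ord_recl big_ord0 addr0 !mxE /=.
by case: i => [[|[|[|?]]] ?] //; case: j => [[|[|[|?]]] ?] //=; rewrite addrA.
Qed.

Lemma mx3_1 : mx3 1 0 0 0 1 0 0 0 1 = 1%:M.
Proof.
apply/matrixP=> i j; rewrite !mxE /=.
by case: i => [[|[|[|?]]] ?] //; case: j => [[|[|[|?]]] ?].
Qed.

Ltac mx_entries :=
  apply/matrixP=> -[[|[|[|?]]] ?] -[[|[|[|?]]] ?]; rewrite !mxE //=;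
  rewrite ?expr0 ?expr1 ?z_exp2_inv //;
  try (by apply: z_exp_add9); try (by rewrite z_exp9).

Definition F2m := diagm [:: 2; 2; 14].
Definition C2m := diagm [:: 6; 0; 12].
Definition Em := permm [:: 1; 2; 0] [:: 0; 0; 0].
Definition Btm := permm [:: 0; 2; 1] [:: 9; 9; 9].
Definition omegam := diagm [:: 6; 6; 6].
(* Monomial forms of the conjugates P⁻¹ X P of X = G1, G2, H1, A, B. *)
Definition G1m := permm [:: 2; 1; 0] [:: 7; 13; 7].
Definition G2m := permm [:: 0; 2; 1] [:: 13; 7; 7].
Definition H1m := permm [:: 1; 0; 2] [:: 9; 9; 9].
Definition Am := diagm [:: 14; 14; 8].
Definition Bm := diagm [:: 0; 12; 6].

Ltac mono_calc :=
  rewrite /F2m /C2m /Em /Btm /omegam /G1m /G2m /H1m /Am /Bm /diagm /permm;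
  rewrite ?expr1 ?expr2 -?mulmxE ?mono_diag_exp ?mono_mul //;
  try rewrite -mono1; apply: mono_eq; reflexivity.

Lemma E_mono : E = Em. Proof. mx_entries. Qed.
Lemma Bt_mono : Bt = Btm. Proof. mx_entries. Qed.
Lemma F_mono : F = diagm [:: 1; 1; 16]. Proof. mx_entries. Qed.

Lemma FF_mono : F *m F = F2m.
Proof. rewrite F_mono; mono_calc. Qed.

Lemma C2_mono : C2 = C2m.
Proof.
have F''_inv : invmx F'' = diagm [:: 2; 17; 17].
  apply: invmx_eq; rewrite (_ : F'' = diagm [:: 16; 1; 1]); last by mx_entries.
  by mono_calc.
rewrite /C2 F''_inv F_mono; mono_calc.
Qed.

Lemma diag3_mono : diag3 1 (- z ^+ 3) (z ^+ 6) = Bm.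
Proof. mx_entries. Qed.

Lemma F12C2_diag : F ^+ 12 *m C2 = diag3 1 (- z ^+ 3) (z ^+ 6).
Proof. rewrite diag3_mono C2_mono F_mono; mono_calc. Qed.

Definition P : M3 := mx3 1 0 1 0 s2 0 (-1) 0 1.
Definition Pinv : M3 := mx3 (1/2) 0 (-1/2) 0 (1/s2) 0 (1/2) 0 (1/2).

Lemma s2_sq : s2 ^+ 2 = 2.
Proof. exact: sqrtCK. Qed.

Lemma s2_neq0 : s2 != 0.
Proof.
apply/eqP=> s0; have := s2_sq.
by rewrite s0 expr0n /= => /eqP; rewrite eq_sym pnatr_eq0.
Qed.

Lemma s2_eq : s2 = 2 / s2.
Proof. by rewrite -[in RHS]s2_sq expr2 mulfK // s2_neq0. Qed.

Ltac mx3_field :=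
  have := s2_neq0; (have : (2 : algC) != 0 by rewrite pnatr_eq0);
  move=> ? ?; rewrite !mx3_mul; congr mx3;
  try (field; done); rewrite [in RHS]s2_eq; by field.

Lemma P_Pinv : P *m Pinv = 1%:M.
Proof. rewrite /P /Pinv -mx3_1; mx3_field. Qed.

Lemma P_unit : P \in unitmx.
Proof. by have [] := mulmx1_unit P_Pinv. Qed.

Lemma conjP_of X Y Yx : X *m P = P *m Yx -> Yx = Y -> conjm P X = Y.
Proof.
by move=> XP <-; rewrite /conjm -mulmxA XP mulmxA mulVmx ?P_unit // mul1mx.
Qed.

Lemma conjP_G1 : conjm P G1 = G1m.
Proof.
by apply: (@conjP_of _ _ (mx3 0 0 (z^+7) 0 (-z^+4) 0 (z^+7) 0 0));
  [rewrite /G1 /diag3 /P; mx3_field | mx_entries].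
Qed.

Lemma conjP_G2 : conjm P G2 = G2m.
Proof.
by apply: (@conjP_of _ _ (mx3 (-z^+4) 0 0 0 0 (z^+7) 0 (z^+7) 0));
  [rewrite /G2 /P; mx3_field | mx_entries].
Qed.

Lemma conjP_H1 : conjm P H1 = H1m.
Proof.
by apply: (@conjP_of _ _ (mx3 0 (-1) 0 (-1) 0 0 0 0 (-1)));
  [rewrite /H1 /P; mx3_field | mx_entries].
Qed.

Lemma conjP_H3 : conjm P H3 = Em.
Proof.
by apply: (@conjP_of _ _ E); [rewrite /H3 /P /E; mx3_field | mx_entries].
Qed.

Lemma conjP_A : conjm P A = Am.
Proof.
have G1m_inv : invmx G1m = permm [:: 2; 1; 0] [:: 11; 5; 11].
  by apply: invmx_eq; mono_calc.
rewrite /A !(conjmM P_unit) (conjmV P_unit) conjP_G1 conjP_G2 G1m_inv; mono_calc.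
Qed.

Lemma conjP_B : conjm P B = Bm.
Proof.
have G2m2_inv : invmx (G2m *m G2m) = diagm [:: 10; 4; 4].
  by apply: invmx_eq; mono_calc.
rewrite /B !(conjmM P_unit) (conjmV P_unit) !(conjmM P_unit) conjP_G2.
by rewrite G2m2_inv conjP_G1; mono_calc.
Qed.

Lemma gen_in0 (a : M3) l : gen (a :: l) a.
Proof. by apply: gen_in; rewrite mem_head. Qed.
Lemma gen_in1 (a b : M3) l : gen (a :: b :: l) b.
Proof. by apply: gen_in; rewrite !inE eqxx orbT. Qed.
Lemma gen_in2 (a b c : M3) l : gen (a :: b :: c :: l) c.
Proof. by apply: gen_in; rewrite !inE eqxx !orbT. Qed.

Ltac gen_word := match goal with
 | |- gen _ (_ *m _) => apply: gen_mul; gen_word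
 | |- gen _ (_ ^+ _) => apply: gen_pow; gen_word
 | |- _ => first [exact: gen_in0 | exact: gen_in1 | exact: gen_in2]
 end.

Lemma gen_word_eq gs (x w : M3) : x = w -> gen gs w -> gen gs x.
Proof. by move->. Qed.

Ltac gen_by w := apply: (@gen_word_eq _ _ w); [mono_calc | gen_word].

Definition Dm := gen [:: F2m; Em; Btm].
Definition NDm := gen [:: F2m; C2m].
Definition KDm := gen [:: Btm; Em].

Lemma D9E : D9 = Dm.
Proof. by rewrite /D9 FF_mono E_mono Bt_mono. Qed.
Lemma NDE : ND = NDm.
Proof. by rewrite /ND FF_mono C2_mono. Qed.
Lemma KDE : KD = KDm.
Proof. by rewrite /KD E_mono Bt_mono. Qed.

Lemma F2m_order : F2m *m F2m ^+ 8 = 1%:M. Proof. mono_calc. Qed.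
Lemma C2m_order : C2m *m C2m ^+ 2 = 1%:M. Proof. mono_calc. Qed.
Lemma Em_order : Em *m Em ^+ 2 = 1%:M. Proof. mono_calc. Qed.
Lemma Btm_order : Btm *m Btm ^+ 1 = 1%:M. Proof. mono_calc. Qed.

(* Since the generators have finite order, properties closed under products
   hold on D, N_D and K_D as soon as they hold on the generators. *)
Lemma Dm_ind (Q : M3 -> Prop) : Q 1%:M -> Q F2m -> Q Em -> Q Btm ->
  (forall x y, Q x -> Q y -> Q (x *m y)) -> forall x, Dm x -> Q x.
Proof.
move=> Q1 QF QE QB QM; apply: gen_ind_mul => // g;
  rewrite !inE => /or3P[]/eqP-> //.
- by apply: mon_inv_gen F2m_order; rewrite !inE eqxx.
- by apply: mon_inv_gen Em_order; rewrite !inE eqxx orbT.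
- by apply: mon_inv_gen Btm_order; rewrite !inE eqxx !orbT.
Qed.

Lemma NDm_ind (Q : M3 -> Prop) : Q 1%:M -> Q F2m -> Q C2m ->
  (forall x y, Q x -> Q y -> Q (x *m y)) -> forall x, NDm x -> Q x.
Proof.
move=> Q1 QF QC QM; apply: gen_ind_mul => // g;
  rewrite !inE => /orP[]/eqP-> //.
- by apply: mon_inv_gen F2m_order; rewrite !inE eqxx.
- by apply: mon_inv_gen C2m_order; rewrite !inE eqxx orbT.
Qed.

Lemma KDm_ind (Q : M3 -> Prop) : Q 1%:M -> Q Btm -> Q Em ->
  (forall x y, Q x -> Q y -> Q (x *m y)) -> forall x, KDm x -> Q x.
Proof.
move=> Q1 QB QE QM; apply: gen_ind_mul => // g;
  rewrite !inE => /orP[]/eqP-> //.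
- by apply: mon_inv_gen Btm_order; rewrite !inE eqxx.
- by apply: mon_inv_gen Em_order; rewrite !inE eqxx orbT.
Qed.

(* Elements of D: monomial with all exponents congruent mod 3. *)
Definition mono_cong3 (x : M3) := exists p e, [/\ x = mono p e, ok3 p
  & forall i, (i < 3)%N -> (e i %% 3 = e 0 %% 3)%N].
(* Elements of N_D: diagonal with entries 9th roots of unity. *)
Definition diag_even (x : M3) := exists e, x = mono (fun i => i) e /\
  forall i, (i < 3)%N -> ~~ odd (e i).
(* Elements of K_D: monomial with entries ±1. *)
Definition signed_perm (x : M3) := exists p e, [/\ x = mono p e, ok3 p
  & forall i, (i < 3)%N -> (9 %| e i)%N].

Lemma mono_cong3_mul x y : mono_cong3 x -> mono_cong3 y -> mono_cong3 (x *m y).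
Proof.
move=> [p1 [e1 [-> p1ok e1c]]] [p2 [e2 [-> p2ok e2c]]].
have p13 := iffLR (ok3E p1) p1ok; have p23 := iffLR (ok3E p2) p2ok.
exists (fun i => p2 (p1 i)), (fun i => e1 i + e2 (p1 i))%N; split.
- by rewrite mono_mul.
- by apply/ok3E=> i /p13 /p23.
- move=> i i3; rewrite -modnDm e1c // e2c ?p13 //.
  by rewrite -(e2c (p1 0%N)) ?p13 // modnDm.
Qed.

Lemma diag_even_mul x y : diag_even x -> diag_even y -> diag_even (x *m y).
Proof.
move=> [e1 [-> e1ev]] [e2 [-> e2ev]]; exists (fun i => e1 i + e2 i)%N; split.
  by rewrite mono_mul.
by move=> i i3; rewrite oddD negb_add (negbTE (e1ev _ i3)) (negbTE (e2ev _ i3)).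
Qed.

Lemma signed_perm_mul x y :
  signed_perm x -> signed_perm y -> signed_perm (x *m y).
Proof.
move=> [p1 [e1 [-> p1ok e1s]]] [p2 [e2 [-> p2ok e2s]]].
have p13 := iffLR (ok3E p1) p1ok; have p23 := iffLR (ok3E p2) p2ok.
exists (fun i => p2 (p1 i)), (fun i => e1 i + e2 (p1 i))%N; split.
- by rewrite mono_mul.
- by apply/ok3E=> i /p13 /p23.
- by move=> i i3; rewrite dvdn_addr ?e1s // e2s ?p13.
Qed.

Lemma Dm_cong3 x : Dm x -> mono_cong3 x.
Proof.
apply: Dm_ind; last exact: mono_cong3_mul.
- by exists (fun i => i), (fun _ => 0%N); rewrite mono1.
- by exists (fun i => i), (L [:: 2; 2; 14]); split=> // -[|[|[|i]]].
- by exists (L [:: 1; 2; 0]), (L [:: 0; 0; 0]); split=> // -[|[|[|i]]].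
- by exists (L [:: 0; 2; 1]), (L [:: 9; 9; 9]); split=> // -[|[|[|i]]].
Qed.

Lemma NDm_diag_even x : NDm x -> diag_even x.
Proof.
apply: NDm_ind; last exact: diag_even_mul.
- by exists (fun _ => 0%N); rewrite mono1.
- by exists (L [:: 2; 2; 14]); split=> // -[|[|[|i]]].
- by exists (L [:: 6; 0; 12]); split=> // -[|[|[|i]]].
Qed.

Lemma KDm_signed_perm x : KDm x -> signed_perm x.
Proof.
apply: KDm_ind; last exact: signed_perm_mul.
- by exists (fun i => i), (fun _ => 0%N); rewrite mono1.
- by exists (L [:: 0; 2; 1]), (L [:: 9; 9; 9]); split=> // -[|[|[|i]]].
- by exists (L [:: 1; 2; 0]), (L [:: 0; 0; 0]); split=> // -[|[|[|i]]].
Qed.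

(* N_D ∩ K_D = 1: a diagonal matrix of 9th roots of unity with entries ±1. *)
Lemma diag_even_signed_perm x : diag_even x -> signed_perm x -> x = 1%:M.
Proof.
move=> [e [-> eev]] [p' [e' [ee' p'ok e's]]].
have p'3 := iffLR (ok3E p') p'ok.
have e1 i : (i < 3)%N -> z ^+ e i = 1.
  move=> i3; apply: (z_exp_even_9 (eev _ i3) (e's _ i3)).
  have := congr1 (fun M : M3 => M (Ordinal i3) (Ordinal (p'3 _ i3))) ee'.
  rewrite /= !mxE /= eqxx; case: eqP => // _ /eqP.
  by rewrite eq_sym (negbTE (z_exp_neq0 _)).
rewrite -mono1; apply: mono_ext => // i i3; rewrite e1 ?expr0.
Qed.

Lemma Dm_normal g n : g \in [:: F2m; Em; Btm] -> n \in [:: F2m; C2m] ->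
  NDm (conjm g n) /\ NDm (conjm (invmx g) n).
Proof.
rewrite !inE => /or3P[]/eqP-> /orP[]/eqP->; rewrite /conjm invmxK;
  rewrite ?(invmx_eq F2m_order) ?(invmx_eq Em_order) ?(invmx_eq Btm_order);
  split.
- gen_by F2m.
- gen_by F2m.
- gen_by C2m.
- gen_by C2m.
- gen_by (F2m *m C2m *m C2m).
- gen_by (F2m ^+ 7 *m C2m).
- gen_by (F2m ^+ 3 *m C2m).
- gen_by (F2m ^+ 6 *m C2m).
- gen_by (F2m ^+ 7 *m C2m).
- gen_by (F2m ^+ 7 *m C2m).
- gen_by (F2m ^+ 6 *m C2m ^+ 2).
- gen_by (F2m ^+ 6 *m C2m ^+ 2).
Qed.

Lemma semidirect_Dm : semidirect Dm NDm KDm.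
Proof.
apply: semidirect_gen.
- move=> g; rewrite !inE => /or3P[]/eqP->;
    [case: (mulmx1_unit F2m_order) | case: (mulmx1_unit Em_order)
    | case: (mulmx1_unit Btm_order)] => //.
- move=> n; rewrite !inE => /orP[]/eqP->; first by gen_word.
  by gen_by (F2m *m F2m *m Btm *m F2m *m Btm).
- by move=> k; rewrite !inE => /orP[]/eqP->; gen_word.
- exact: Dm_normal.
- move=> g; rewrite !inE => /or3P[]/eqP->.
  + by exists F2m, 1%:M; split; [gen_word | apply: gen_one | rewrite mulmx1].
  + by exists 1%:M, Em; split; [apply: gen_one | gen_word | rewrite mul1mx].
  + by exists 1%:M, Btm; split; [apply: gen_one | gen_word | rewrite mul1mx].
- move=> x /NDm_diag_even xN /KDm_signed_perm xK; exact: diag_even_signed_perm.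
Qed.

Lemma Fr162_conjP x : Fr162 x <-> Dm (conjm P x).
Proof.
apply: (iff_trans (@gen_conjm P [:: G1; G2] x P_unit)).
rewrite /= conjP_G1 conjP_G2.
apply: gen_same => g; rewrite !inE.
- case/orP=> /eqP->.
  + gen_by (F2m *m Em *m Btm *m F2m).
  + gen_by (F2m *m Btm *m F2m).
- case/or3P=> /eqP->.
  + gen_by (G1m *m G1m *m G1m *m G1m *m G1m *m G2m *m G2m *m G1m).
  + gen_by (G1m *m G1m *m G1m *m G1m *m G1m *m G1m *m G1m *m G2m
            *m G1m *m G1m *m G1m *m G1m).
  + gen_by (G1m *m G1m *m G1m *m G1m *m G1m *m G1m *m G2m *m G2m *m G2m).
Qed.

Lemma NN_conjP x : NN x <-> NDm (conjm P x).
Proof.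
apply: (iff_trans (@gen_conjm P [:: A; B] x P_unit)).
rewrite /= conjP_A conjP_B.
apply: gen_same => g; rewrite !inE => /orP[]/eqP->.
- gen_by (F2m ^+ 7).
- gen_by (F2m ^+ 6 *m C2m).
- gen_by (Am ^+ 4).
- gen_by (Am ^+ 3 *m Bm).
Qed.

Lemma KH_conjP x : KH x <-> KDm (conjm P x).
Proof.
apply: (iff_trans (@gen_conjm P [:: H1; H3] x P_unit)).
rewrite /= conjP_H1 conjP_H3.
apply: gen_same => g; rewrite !inE => /orP[]/eqP->.
- gen_by (Btm *m Em).
- gen_word.
- gen_by (H1m *m Em *m Em).
- gen_word.
Qed.

Lemma semidirect_Fr162 : semidirect Fr162 NN KH.
Proof.
exact: (semidirect_conjm P_unit Fr162_conjP NN_conjP KH_conjP semidirect_Dm).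
Qed.

(* The cubic character of D: on a monomial matrix with exponents ≡ e0 (mod 3)
   it is z^(12 e0), a cube root of unity, read off from the first row. *)
Definition chi (y : M3) : algC := (\sum_(j < 3) y ord0 j) ^+ 12.

Lemma chi_mono p e : (p 0 < 3)%N -> chi (mono p e) = z ^+ (12 * e 0%N).
Proof.
move=> p0; rewrite /chi (bigD1 (Ordinal p0)) //= big1 ?addr0.
  by rewrite mxE eqxx -exprM mulnC.
move=> k /negbTE p0k; rewrite mxE.
suff -> : (p 0%N == k) = false by [].
by apply: contraFF p0k => /eqP pk; apply/eqP/val_inj.
Qed.

Lemma chi_scale c y : chi (c *: y) = c ^+ 12 * chi y.
Proof.
rewrite /chi -exprMn; congr (_ ^+ _).
by rewrite mulr_sumr; apply: eq_bigr => j _; rewrite mxE.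
Qed.

(* z¹² is a cube root of unity. *)
Lemma z_exp12_mod3 a b : (a %% 3 = b %% 3)%N -> z ^+ (12 * a) = z ^+ (12 * b).
Proof. by move=> ab; apply: z_exp_eqmod; lia. Qed.

Lemma chi_mul x y : mono_cong3 x -> mono_cong3 y -> chi (x *m y) = chi x * chi y.
Proof.
move=> [p1 [e1 [-> p1ok _]]] [p2 [e2 [-> p2ok e2c]]].
have p13 := iffLR (ok3E p1) p1ok; have p23 := iffLR (ok3E p2) p2ok.
rewrite mono_mul // !chi_mono ?p13 ?p23 ?p13 //.
by rewrite mulnDr exprD (z_exp12_mod3 (e2c _ (p13 _ _))).
Qed.

Lemma chi_cube y : mono_cong3 y -> exists k, chi y = z ^+ (12 * k).
Proof.
move=> [p [e [-> pok _]]]; exists (e 0%N).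
by rewrite chi_mono //; move/ok3E: pok; apply.
Qed.

(* Twisting by χ does not change χ, since χ takes cube roots of unity. *)
Lemma chi_twist y : mono_cong3 y -> chi (chi y *: y) = chi y.
Proof.
move=> cy; have [k ek] := chi_cube cy.
rewrite chi_scale {1}ek -exprM z_exp_dvd ?mul1r //.
by apply/dvdnP; exists (8 * k)%N; lia.
Qed.

Lemma omegam_exp n : omegam ^+ n = z ^+ (6 * n) *: 1%:M.
Proof.
rewrite /omegam /diagm mono_diag_exp -mono1 mono_scale.
by apply: mono_ext => // -[|[|[|i]]] //= _; rewrite mulnC addn0.
Qed.

Lemma Dm_scale y n : Dm y -> Dm (z ^+ (6 * n) *: y).
Proof.
move=> Dy; rewrite -[y]mul1mx scalemxAl -omegam_exp.
by apply: gen_mul => //; apply: gen_pow; gen_by (F2m ^+ 3).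
Qed.

Definition phi (x : M3) : M3 := chi (conjm P x) *: conjm P x.

Lemma Fr162_cong3 x : Fr162 x -> mono_cong3 (conjm P x).
Proof. by move=> /Fr162_conjP /Dm_cong3. Qed.

Lemma phi_in x : Fr162 x -> Dm (phi x).
Proof.
move=> Frx; rewrite /phi; have [k ->] := chi_cube (Fr162_cong3 Frx).
rewrite (_ : 12 * k = 6 * (2 * k))%N; last by lia.
exact/Dm_scale/Fr162_conjP.
Qed.

Lemma phiM x y : Fr162 x -> Fr162 y -> phi (x *m y) = phi x *m phi y.
Proof.
move=> Frx Fry; rewrite /phi (conjmM P_unit).
rewrite (chi_mul (Fr162_cong3 Frx) (Fr162_cong3 Fry)).
by rewrite -scalemxAl -scalemxAr scalerA.
Qed.

Lemma phi_inj x y : Fr162 x -> Fr162 y -> phi x = phi y -> x = y.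
Proof.
move=> /Fr162_cong3 cx /Fr162_cong3 cy; rewrite /phi => exy.
have chi_xy : chi (conjm P x) = chi (conjm P y).
  by rewrite -(chi_twist cx) exy chi_twist.
move: exy; rewrite chi_xy; have [k ->] := chi_cube cy.
by move/(scalerI (z_exp_neq0 _))/(conjm_inj P_unit).
Qed.

(* The preimage of y = mono p e is P (z^(24 e0) y) P⁻¹. *)
Lemma phi_onto y : Dm y -> exists2 x, Fr162 x & phi x = y.
Proof.
move=> Dy; have [p [e [ye pok _]]] := Dm_cong3 Dy.
set y' := z ^+ (6 * (4 * e 0%N)) *: y.
exists (conjm (invmx P) y').
  by apply/Fr162_conjP; rewrite (conjmVK P_unit); apply: Dm_scale.
have p0 : (p 0 < 3)%N by move/ok3E: pok; apply.
rewrite /phi (conjmVK P_unit) /y' ye mono_scale chi_mono // mono_scale.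
by apply: mono_ext => // i _; apply: z_exp_eqmod; lia.
Qed.

Lemma phi_iso : group_iso Fr162 D9 phi.
Proof.
by rewrite D9E; split; [exact: phi_in | exact: phiM | exact: phi_inj
                       | exact: phi_onto].
Qed.

Lemma phi_mono x p e : (p 0 < 3)%N -> conjm P x = mono p e ->
  phi x = mono p (fun i => 12 * e 0%N + e i)%N.
Proof. by move=> p0 ex; rewrite /phi ex chi_mono // mono_scale. Qed.

Theorem theorem6 :
  [/\ semidirect Fr162 NN KH,
      semidirect D9 ND KD,
      F ^+ 12 *m C2 = diag3 1 (- z ^+ 3) (z ^+ 6)
    & exists f : M3 -> M3,
        [/\ group_iso Fr162 D9 f,
            f A = F *m F,
            f B = F ^+ 12 *m C2,
            f H1 = Bt *m E
          & f H3 = E]].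
Proof.
split; [exact: semidirect_Fr162 | | exact: F12C2_diag |].
  by rewrite D9E NDE KDE; apply: semidirect_Dm.
exists phi; split; first exact: phi_iso.
- by rewrite (phi_mono _ conjP_A) // FF_mono; mono_calc.
- by rewrite (phi_mono _ conjP_B) // F12C2_diag diag3_mono; mono_calc.
- by rewrite (phi_mono _ conjP_H1) // Bt_mono E_mono; mono_calc.
- by rewrite (phi_mono _ conjP_H3) // E_mono; mono_calc.
Qed.
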